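(* Let $R$ be a t-unital ring and $\widetilde R=\mathbb Z\oplus R$ its unitalization. Then the full subcategory of c-unital left $R$-modules is closed under cokernels in the category of all (nonunital) left $R$-modules if and only if $R$ is a projective unital left $\widetilde R$-module.
   Context: Rings are associative, not necessarily unital; modules are not assumed unital. $\widetilde R=\mathbb Z\oplus R$ is the unital ring obtained by formally adjoining a unit, with $R$ a two-sided ideal; nonunital $R$-modules are the same as unital $\widetilde R$-modules. $R$ is t-unital if $R\otimes_R R\to R$ is an isomorphism. A left $R$-module $P$ is c-unital if $P\to\mathrm{Hom}_R(R,P)$, $p\mapsto(r\mapsto rp)$, is an isomorphism. *)

From HB Require Import structures.
From mathcomp Require Import all_boot all_order all_algebra.
Set Implicit Arguments. Unset Strict Implicit. Unset Printing Implicit Defensive.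
Import GRing.Theory.
Local Open Scope ring_scope.

Record nuRing := NuRing {
  nr_sort :> zmodType;
  nr_mul : nr_sort -> nr_sort -> nr_sort;
  nr_mulA : forall r s t, nr_mul (nr_mul r s) t = nr_mul r (nr_mul s t);
  nr_mulDl : forall r s t, nr_mul (r + s) t = nr_mul r t + nr_mul s t;
  nr_mulDr : forall r s t, nr_mul r (s + t) = nr_mul r s + nr_mul r t }.

Record nuLmod (R : nuRing) := NuLmod {
  lm_sort :> zmodType;
  lm_act : R -> lm_sort -> lm_sort;
  lm_actA : forall r s m, lm_act (@nr_mul R r s) m = lm_act r (lm_act s m);
  lm_actDl : forall r s m, lm_act (r + s) m = lm_act r m + lm_act s m;
  lm_actDr : forall r m n, lm_act r (m + n) = lm_act r m + lm_act r n }.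

Definition is_hom (R : nuRing) (M N : nuLmod R) (f : M -> N) : Prop :=
  (forall x y, f (x + y) = f x + f y) /\
  (forall r m, f (lm_act r m) = lm_act r (f m)).

Definition regular (R : nuRing) : nuLmod R :=
  @NuLmod R R (@nr_mul R) (@nr_mulA R) (@nr_mulDl R) (@nr_mulDr R).

(** t-unitality: the multiplication map R ⊗_R R -> R is an isomorphism,
    stated through the universal property of R ⊗_R R: the multiplication
    R x R -> R is a universal biadditive R-balanced map into abelian groups. *)
Definition t_unital (R : nuRing) : Prop :=
  forall (A : zmodType) (f : R -> R -> A),
    (forall r r' s, f (r + r') s = f r s + f r' s) ->
    (forall r s s', f r (s + s') = f r s + f r s') ->
    (forall r s t, f (@nr_mul R r s) t = f r (@nr_mul R s t)) ->
    exists g : R -> A,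
      [/\ (forall x y, g (x + y) = g x + g y),
          (forall r s, f r s = g (@nr_mul R r s)) &
          (forall g' : R -> A, (forall x y, g' (x + y) = g' x + g' y) ->
             (forall r s, f r s = g' (@nr_mul R r s)) -> forall x, g' x = g x)].

(** c-unitality: the map P -> Hom_R(R, P), p |-> (r |-> r p), is bijective. *)
Definition c_unital (R : nuRing) (P : nuLmod R) : Prop :=
  (forall p p' : P, (forall r, lm_act r p = lm_act r p') -> p = p') /\
  (forall f : R -> P, @is_hom R (regular R) P f ->
     exists p : P, forall r, f r = lm_act r p).

Definition is_cokernel (R : nuRing) (P Q C : nuLmod R) (f : P -> Q) (g : Q -> C)
  : Prop :=
  is_hom g /\ (forall p, g (f p) = 0) /\
  (forall (D : nuLmod R) (h : Q -> D), is_hom h -> (forall p, h (f p) = 0) ->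
     exists k : C -> D, [/\ is_hom k, (forall q, k (g q) = h q) &
       (forall k' : C -> D, is_hom k' -> (forall q, k' (g q) = h q) ->
          forall c, k' c = k c)]).

Definition c_unital_closed_under_cokernels (R : nuRing) : Prop :=
  forall (P Q C : nuLmod R) (f : P -> Q) (g : Q -> C),
    is_hom f -> c_unital P -> c_unital Q -> is_cokernel f g -> c_unital C.

(** The unitalization  R~ = Z ⊕ R, with elements (n, r) : int * R and
    multiplication (n, r)(m, s) = (nm, n s + m r + r s). *)
Definition rt_mul (R : nuRing) (a b : int * R) : int * R :=
  (a.1 * b.1, b.2 *~ a.1 + a.2 *~ b.1 + @nr_mul R a.2 b.2).
Definition rt_add (R : nuRing) (a b : int * R) : int * R :=
  (a.1 + b.1, a.2 + b.2).

Record rtLmod (R : nuRing) := RtLmod {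
  rt_sort :> zmodType;
  rt_act : int * R -> rt_sort -> rt_sort;
  rt_act1 : forall m, rt_act (1, 0) m = m;
  rt_actA : forall a b m, rt_act (rt_mul a b) m = rt_act a (rt_act b m);
  rt_actDl : forall a b m, rt_act (rt_add a b) m = rt_act a m + rt_act b m;
  rt_actDr : forall a m n, rt_act a (m + n) = rt_act a m + rt_act a n }.

Definition rt_lin (R : nuRing) (A B : zmodType)
  (actA : int * R -> A -> A) (actB : int * R -> B -> B) (f : A -> B) : Prop :=
  (forall x y, f (x + y) = f x + f y) /\ (forall a x, f (actA a x) = actB a (f x)).

(** The action of R~ on R (R is a two-sided ideal of R~). *)
Definition rt_actR (R : nuRing) (a : int * R) (s : R) : R :=
  s *~ a.1 + @nr_mul R a.2 s.

Definition R_projective_over_unitalization (R : nuRing) : Prop :=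
  forall (M N : rtLmod R) (g : M -> N) (h : R -> N),
    rt_lin (@rt_act R M) (@rt_act R N) g ->
    (forall n : N, exists m : M, g m = n) ->
    rt_lin (@rt_actR R) (@rt_act R N) h ->
    exists k : R -> M,
      rt_lin (@rt_actR R) (@rt_act R M) k /\ (forall s, g (k s) = h s).

From HB Require Import structures.
From mathcomp Require Import all_boot all_order all_algebra.
From mathcomp Require Import boolp classical_sets.
Set Implicit Arguments. Unset Strict Implicit. Unset Printing Implicit Defensive.
Import GRing.Theory.
Local Open Scope ring_scope.

(** If R is projective over R~, let g : Q -> C be a cokernel of f : P -> Q
    with P and Q c-unital.  A map R -> C lifts along the surjection g to a map
    R -> Q, which is r |-> r q by c-unitality of Q, so it is r |-> r (g q).  If
    r (g q) = 0 for all r, then every r q lies in the image of f; lifting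
    r |-> r q along P ->> im f and using c-unitality of P and Q puts q itself
    in im f, so g q = 0.

    Conversely, let g : M ->> N be R~-linear and h : R -> N.  When R is
    t-unital every Hom_R(R, X) is c-unital, so by hypothesis the cokernel of
    the postcomposition map g_* : Hom_R(R, M) -> Hom_R(R, N) is c-unital.  For
    each r pick m with g m = h r; then (r h)(s) = h (s r) = s (h r) = g (s m),
    so r h = g_* (s |-> s m) vanishes in the cokernel, and c-unitality forces
    h itself to vanish there, i.e. h = g_* k. *)

Section AdditiveMorphism.
Variables (A B : zmodType) (f : A -> B) (fD : {morph f : x y / x + y}).

Let f_zmod_morphism : zmod_morphism f.
Proof. by move=> x y; apply: (addIr (f y)); rewrite -fD !subrK. Qed.

Let f_additive : {additive A -> B} :=
  HB.pack f (GRing.isZmodMorphism.Build A B f f_zmod_morphism).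

Lemma morphD0 : f 0 = 0.
Proof. exact: (raddf0 f_additive). Qed.

Lemma morphDN : {morph f : x / - x}.
Proof. exact: (raddfN f_additive). Qed.

Lemma morphDB : {morph f : x y / x - y}.
Proof. exact: (raddfB f_additive). Qed.

Lemma morphDMz n : {morph f : x / x *~ n}.
Proof. exact: (raddfMz f_additive). Qed.

End AdditiveMorphism.

Section NuLmodTheory.
Variables (R : nuRing) (M : nuLmod R).
Local Notation act := (@lm_act R M).

Lemma act0r m : act 0 m = 0.
Proof. exact: (morphD0 (f := act^~ m) (fun r s => lm_actDl r s m)). Qed.

Lemma actMzr r m n : act (r *~ n) m = act r m *~ n.
Proof. exact: (morphDMz (f := act^~ m) (fun r s => lm_actDl r s m)). Qed.

Lemma actr0 r : act r 0 = 0.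
Proof. exact: (morphD0 (lm_actDr r)). Qed.

Lemma actrN r m : act r (- m) = - act r m.
Proof. exact: (morphDN (lm_actDr r)). Qed.

Lemma actrB r m n : act r (m - n) = act r m - act r n.
Proof. exact: (morphDB (lm_actDr r)). Qed.

Lemma actrMz r m n : act r (m *~ n) = act r m *~ n.
Proof. exact: (morphDMz (lm_actDr r)). Qed.

End NuLmodTheory.

Section Unitalization.
Variable R : nuRing.

Section NuToRt.
Variable M : nuLmod R.

Definition nu_rt_act (a : int * R) (m : M) : M := m *~ a.1 + lm_act a.2 m.

Lemma nu_rt_act1 m : nu_rt_act (1, 0) m = m.
Proof. by rewrite /nu_rt_act /= act0r addr0. Qed.

Lemma nu_rt_actA a b m : nu_rt_act (rt_mul a b) m = nu_rt_act a (nu_rt_act b m).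
Proof.
case: a b => [n r] [k s]; rewrite /nu_rt_act /rt_mul /=.
rewrite !lm_actDl lm_actA !actMzr lm_actDr actrMz mulrzDl mulrC mulrzA.
by rewrite -!addrA; congr (_ + _); rewrite [RHS]addrC -!addrA.
Qed.

Lemma nu_rt_actDl a b m : nu_rt_act (rt_add a b) m = nu_rt_act a m + nu_rt_act b m.
Proof.
case: a b => [n r] [k s]; rewrite /nu_rt_act /rt_add /= lm_actDl mulrzDr.
by rewrite -!addrA; congr (_ + _); rewrite addrCA.
Qed.

Lemma nu_rt_actDr a m m' : nu_rt_act a (m + m') = nu_rt_act a m + nu_rt_act a m'.
Proof.
by rewrite /nu_rt_act lm_actDr mulrzDl -!addrA; congr (_ + _); rewrite addrCA.
Qed.

Definition rtLmod_of : rtLmod R :=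
  RtLmod nu_rt_act1 nu_rt_actA nu_rt_actDl nu_rt_actDr.

End NuToRt.

Section RtToNu.
Variable N : rtLmod R.
Local Notation ract := (@rt_act R N).

Definition rt_nu_act (r : R) (m : N) : N := ract (0, r) m.

Lemma rt_nu_actA r s m : rt_nu_act (nr_mul r s) m = rt_nu_act r (rt_nu_act s m).
Proof.
by rewrite /rt_nu_act -rt_actA /rt_mul /= mulr0 !mulr0z !add0r.
Qed.

Lemma rt_nu_actDl r s m : rt_nu_act (r + s) m = rt_nu_act r m + rt_nu_act s m.
Proof. by rewrite /rt_nu_act -rt_actDl /rt_add /= addr0. Qed.

Definition nuLmod_of : nuLmod R :=
  NuLmod rt_nu_actA rt_nu_actDl (fun r => @rt_actDr R N (0, r)).

Lemma rt_act_split n r m : ract (n, r) m = m *~ n + rt_nu_act r m.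
Proof.
have actD a b : ract (a + b, 0) m = ract (a, 0) m + ract (b, 0) m.
  by rewrite -rt_actDl /rt_add /= addr0.
have -> : ract (n, r) m = ract (n, 0) m + rt_nu_act r m.
  by rewrite -rt_actDl /rt_add /= addr0 add0r.
have := morphDMz (f := fun a => ract (a, 0) m) actD n 1.
by rewrite /= intz rt_act1 => ->.
Qed.

End RtToNu.

Lemma rt_lin_of_hom (M N : nuLmod R) (f : M -> N) :
  is_hom f -> rt_lin (@rt_act R (rtLmod_of M)) (@rt_act R (rtLmod_of N)) f.
Proof.
case=> fD fA; split => // [[n r] x]; rewrite /= /nu_rt_act /= fD fA.
by rewrite (morphDMz fD).
Qed.

Lemma hom_of_rt_lin (M N : nuLmod R) (f : M -> N) :
  rt_lin (@rt_act R (rtLmod_of M)) (@rt_act R (rtLmod_of N)) f -> is_hom f.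
Proof.
case=> fD fA; split => // r m.
by have := fA (0, r) m; rewrite /= /nu_rt_act /= !mulr0z !add0r.
Qed.

Lemma rt_lin_of_nu_hom (M : nuLmod R) (N : rtLmod R) (f : M -> N) :
  @is_hom R M (nuLmod_of N) f -> rt_lin (@rt_act R (rtLmod_of M)) (@rt_act R N) f.
Proof.
case=> fD fA; split => // [[n r] x].
by rewrite /= /nu_rt_act /= fD rt_act_split (morphDMz fD) fA.
Qed.

Lemma nu_hom_of_rt_lin (M : nuLmod R) (N : rtLmod R) (f : M -> N) :
  rt_lin (@rt_act R (rtLmod_of M)) (@rt_act R N) f -> @is_hom R M (nuLmod_of N) f.
Proof.
case=> fD fA; split => // r m.
by have := fA (0, r) m; rewrite /= /nu_rt_act /= mulr0z add0r.
Qed.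

End Unitalization.

Section Submodules.
Variable R : nuRing.

Record submod_pred (M : nuLmod R) := SubmodPred {
  submod_mem :> M -> Prop;
  submod0 : submod_mem 0;
  submodB : forall x y, submod_mem x -> submod_mem y -> submod_mem (x - y);
  submod_act : forall r x, submod_mem x -> submod_mem (lm_act r x) }.

Section ImageSubmodule.
Variables (P Q : nuLmod R) (f : P -> Q).
Hypothesis f_hom : is_hom f.

Definition image_pred (q : Q) : Prop := exists p, f p = q.

Lemma image_pred0 : image_pred 0.
Proof. by exists 0; apply: morphD0 f_hom.1. Qed.

Lemma image_predB x y : image_pred x -> image_pred y -> image_pred (x - y).
Proof. by move=> [p <-] [p' <-]; exists (p - p'); rewrite (morphDB f_hom.1). Qed.

Lemma image_pred_act r x : image_pred x -> image_pred (lm_act r x).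
Proof. by move=> [p <-]; exists (lm_act r p); apply: f_hom.2. Qed.

Definition image_submod : submod_pred Q :=
  SubmodPred image_pred0 image_predB image_pred_act.

End ImageSubmodule.

Section SubmodTheory.
Variables (M : nuLmod R) (S : submod_pred M).

Lemma submodN x : S x -> S (- x).
Proof. by move=> Sx; rewrite -sub0r; apply: submodB => //; apply: submod0. Qed.

Lemma submodD x y : S x -> S y -> S (x + y).
Proof. by move=> Sx Sy; rewrite -[y]opprK; apply/submodB/submodN. Qed.

Definition sub_type := {x : M | `[< S x >]}.
HB.instance Definition _ := Choice.copy sub_type {x : M | `[< S x >]}.

Definition sub_elem x (Sx : S x) : sub_type := exist _ x (asboolT Sx).

Lemma sub_valP (a : sub_type) : S (val a).
Proof. exact: asboolW (valP a). Qed.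

Definition sub_zero := sub_elem (submod0 S).
Definition sub_add (a b : sub_type) := sub_elem (submodD (sub_valP a) (sub_valP b)).
Definition sub_opp (a : sub_type) := sub_elem (submodN (sub_valP a)).

Lemma sub_addA : associative sub_add.
Proof. by move=> a b c; apply: val_inj; rewrite /= addrA. Qed.
Lemma sub_addC : commutative sub_add.
Proof. by move=> a b; apply: val_inj; rewrite /= addrC. Qed.
Lemma sub_add0 : left_id sub_zero sub_add.
Proof. by move=> a; apply: val_inj; rewrite /= add0r. Qed.
Lemma sub_addN : left_inverse sub_zero sub_opp sub_add.
Proof. by move=> a; apply: val_inj; rewrite /= addNr. Qed.
HB.instance Definition _ :=
  GRing.isZmodule.Build sub_type sub_addA sub_addC sub_add0 sub_addN.

Definition sub_act r (a : sub_type) : sub_type := sub_elem (submod_act r (sub_valP a)).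

Lemma sub_actA r s a : sub_act (nr_mul r s) a = sub_act r (sub_act s a).
Proof. by apply: val_inj; rewrite /= lm_actA. Qed.
Lemma sub_actDl r s a : sub_act (r + s) a = sub_act r a + sub_act s a.
Proof. by apply: val_inj; rewrite /= lm_actDl. Qed.
Lemma sub_actDr r a b : sub_act r (a + b) = sub_act r a + sub_act r b.
Proof. by apply: val_inj; rewrite /= lm_actDr. Qed.

Definition sub_mod : nuLmod R := NuLmod sub_actA sub_actDl sub_actDr.

End SubmodTheory.

Section Quotient.
Variables (M : nuLmod R) (S : submod_pred M).

(* M / S is modelled by the canonical representatives [quot_repr x] of the
   cosets x + S, chosen by [xget] so that they depend only on the coset. *)
Definition quot_repr (x : M) : M := xget 0 (fun y => S (y - x)).

Lemma quot_reprP x : S (quot_repr x - x).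
Proof.
by apply: (xgetPex 0 (P := fun y => S (y - x))); exists x; rewrite subrr; apply: submod0.
Qed.

Lemma quot_repr_eq x y : S (x - y) -> quot_repr x = quot_repr y.
Proof.
move=> Sxy; rewrite /quot_repr; congr (xget 0 _); apply: funext => z.
apply: propext; split => Sz.
  by have := submodD Sz Sxy; rewrite addrA subrK.
by have := submodB Sz Sxy; rewrite opprB addrA subrK.
Qed.

Lemma quot_reprK x : quot_repr (quot_repr x) = quot_repr x.
Proof. exact/quot_repr_eq/quot_reprP. Qed.

Definition quot_type := {x : M | quot_repr x == x}.
HB.instance Definition _ := Choice.copy quot_type {x : M | quot_repr x == x}.

Definition quot_pi (x : M) : quot_type :=
  exist _ (quot_repr x) (introT eqP (quot_reprK x)).

Lemma quot_piK (a : quot_type) : quot_pi (val a) = a.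
Proof. by apply: val_inj => /=; apply/eqP/(valP a). Qed.

Lemma quot_pi_eq x y : quot_pi x = quot_pi y <-> S (x - y).
Proof.
split=> [/(congr1 val) /= eq_xy | Sxy]; last exact/val_inj/quot_repr_eq.
have := submodB (quot_reprP y) (quot_reprP x).
by rewrite eq_xy opprB addrC addrA subrK.
Qed.

Lemma quot_pi_val x : S (val (quot_pi x) - x).
Proof. exact: quot_reprP. Qed.

Definition quot_add (a b : quot_type) := quot_pi (val a + val b).
Definition quot_opp (a : quot_type) := quot_pi (- val a).

Lemma quot_addE x y : quot_add (quot_pi x) (quot_pi y) = quot_pi (x + y).
Proof.
by apply/quot_pi_eq; rewrite opprD addrACA; apply: submodD; apply: quot_pi_val.
Qed.

Lemma quot_oppE x : quot_opp (quot_pi x) = quot_pi (- x).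
Proof. by apply/quot_pi_eq; rewrite -opprD; apply/submodN/quot_pi_val. Qed.

Lemma quot_addA : associative quot_add.
Proof.
move=> a b c; rewrite -[a]quot_piK -[b]quot_piK -[c]quot_piK.
by rewrite !quot_addE addrA.
Qed.
Lemma quot_addC : commutative quot_add.
Proof. by move=> a b; rewrite -[a]quot_piK -[b]quot_piK !quot_addE addrC. Qed.
Lemma quot_add0 : left_id (quot_pi 0) quot_add.
Proof. by move=> a; rewrite -[a]quot_piK quot_addE add0r. Qed.
Lemma quot_addN : left_inverse (quot_pi 0) quot_opp quot_add.
Proof. by move=> a; rewrite -[a]quot_piK quot_oppE quot_addE addNr. Qed.
HB.instance Definition _ :=
  GRing.isZmodule.Build quot_type quot_addA quot_addC quot_add0 quot_addN.

Definition quot_act r (a : quot_type) : quot_type := quot_pi (lm_act r (val a)).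

Lemma quot_actE r x : quot_act r (quot_pi x) = quot_pi (lm_act r x).
Proof. by apply/quot_pi_eq; rewrite -actrB; apply/submod_act/quot_pi_val. Qed.

Lemma quot_actA r s a : quot_act (nr_mul r s) a = quot_act r (quot_act s a).
Proof. by rewrite -[a]quot_piK !quot_actE lm_actA. Qed.
Lemma quot_actDl r s a : quot_act (r + s) a = quot_act r a + quot_act s a.
Proof. by rewrite -[a]quot_piK !quot_actE lm_actDl -quot_addE. Qed.
Lemma quot_actDr r a b : quot_act r (a + b) = quot_act r a + quot_act r b.
Proof.
rewrite -[a]quot_piK -[b]quot_piK.
by rewrite [_ + _]quot_addE !quot_actE lm_actDr -quot_addE.
Qed.

Definition quot_mod : nuLmod R := NuLmod quot_actA quot_actDl quot_actDr.

Lemma quot_pi_hom : @is_hom R M quot_mod quot_pi.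
Proof. by split=> [x y | r x]; [rewrite -quot_addE | rewrite -quot_actE]. Qed.

Lemma quot_pi_eq0 x : (quot_pi x = 0 :> quot_mod) <-> S x.
Proof. by rewrite [0]/(quot_pi 0) quot_pi_eq subr0. Qed.

Lemma quot_pi_factor (D : nuLmod R) (h : M -> D) :
  is_hom h -> (forall x, S x -> h x = 0) ->
  exists k : quot_mod -> D, [/\ is_hom k, (forall x, k (quot_pi x) = h x) &
    (forall k' : quot_mod -> D, is_hom k' -> (forall x, k' (quot_pi x) = h x) ->
       forall c, k' c = k c)].
Proof.
move=> [hD hA] hS.
have h_repr x : h (val (quot_pi x)) = h x.
  by apply/eqP; rewrite -subr_eq0 -(morphDB hD); apply/eqP/hS/quot_pi_val.
exists (fun a => h (val a)); split => //.
- by split=> [a b | r a] /=; rewrite h_repr ?hD ?hA.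
- by move=> k' _ k'_pi c; rewrite -[c]quot_piK k'_pi.
Qed.

Lemma c_unital_quot_saturated x :
  c_unital quot_mod -> (forall r, S (lm_act r x)) -> S x.
Proof.
move=> [quot_inj _] S_rx; apply/(quot_pi_eq0 x); apply: quot_inj => r.
by rewrite -quot_pi_hom.2 (proj2 (quot_pi_eq0 _) (S_rx r)) actr0.
Qed.

End Quotient.

Lemma quot_image_cokernel (P Q : nuLmod R) (f : P -> Q) (f_hom : is_hom f) :
  @is_cokernel R P Q (quot_mod (image_submod f_hom)) f (quot_pi _).
Proof.
split; first exact: quot_pi_hom.
split; first by move=> p; apply/quot_pi_eq0; exists p.
by move=> D h h_hom hf; apply: quot_pi_factor => // _ [p <-].
Qed.

End Submodules.

Lemma hom0 (R : nuRing) (M N : nuLmod R) : @is_hom R M N (fun _ => 0).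
Proof. by split=> *; rewrite ?addr0 ?actr0. Qed.

Lemma hom_comp (R : nuRing) (L M N : nuLmod R) (g : M -> N) (h : L -> M) :
  is_hom g -> is_hom h -> is_hom (g \o h).
Proof. by move=> [gD gA] [hD hA]; split=> [x y | r x] /=; rewrite ?hD ?gD ?hA ?gA. Qed.

Section Cokernels.
Variables (R : nuRing) (P Q C : nuLmod R) (f : P -> Q) (g : Q -> C).
Hypotheses (f_hom : is_hom f) (g_coker : is_cokernel f g).

Lemma cokernel_hom_eq (D : nuLmod R) (k k' : C -> D) :
  is_hom k -> is_hom k' -> (forall q, k (g q) = k' (g q)) -> forall c, k c = k' c.
Proof.
case: g_coker => [[gD gA] [gf univ]] k_hom k'_hom kk'; have [kD kA] := k_hom.
have kgf p : (k \o g) (f p) = 0 by rewrite /= gf (morphD0 kD).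
have [u [_ _ uU]] := univ D _ (hom_comp k_hom (conj gD gA)) kgf.
move=> c; rewrite (uU k k_hom (fun _ => erefl)).
by rewrite (uU k' k'_hom (fun q => esym (kk' q))).
Qed.

Lemma cokernel_surj c : exists q, g q = c.
Proof.
have g_hom : is_hom g := g_coker.1.
pose S := image_submod g_hom.
have pi_g q : quot_pi S (g q) = (fun _ => 0 : quot_mod S) (g q).
  by apply/quot_pi_eq0; exists q.
exact/(quot_pi_eq0 S c)/(cokernel_hom_eq (quot_pi_hom S) (hom0 _ _) pi_g).
Qed.

Lemma cokernel_ker q : g q = 0 -> exists p, f p = q.
Proof.
case: g_coker => g_hom [_ univ] gq0; pose S := image_submod f_hom.
have pi_f p : quot_pi S (f p) = 0 by apply/quot_pi_eq0; exists p.
have [k [[kD _] k_g _]] := univ (quot_mod S) _ (quot_pi_hom S) pi_f.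
by apply/(quot_pi_eq0 S q); rewrite -k_g gq0 (morphD0 kD).
Qed.

End Cokernels.

Section HomFromR.
Variable R : nuRing.
Local Notation "r ** s" := (@nr_mul R r s) (at level 40).

Lemma t_unital_additive_eq (A : zmodType) (g g' : R -> A) : t_unital R ->
  {morph g : x y / x + y} -> {morph g' : x y / x + y} ->
  (forall r s, g (r ** s) = g' (r ** s)) -> g =1 g'.
Proof.
move=> tu gD g'D gg' x; pose f r s := g (r ** s).
have fDl r r' s : f (r + r') s = f r s + f r' s by rewrite /f nr_mulDl gD.
have fDr r s s' : f r (s + s') = f r s + f r s' by rewrite /f nr_mulDr gD.
have fA r s t : f (r ** s) t = f r (s ** t) by rewrite /f nr_mulA.
have [u [_ _ uU]] := tu A f fDl fDr fA.
by rewrite (uU g gD (fun _ _ => erefl)) (uU g' g'D gg').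
Qed.

Variable M : nuLmod R.
Local Notation act := (@lm_act R M).

Definition homR := {phi : R -> M | `[< @is_hom R (regular R) M phi >]}.
HB.instance Definition _ :=
  Choice.copy homR {phi : R -> M | `[< @is_hom R (regular R) M phi >]}.

Definition homR_of (phi : R -> M) (phi_hom : @is_hom R (regular R) M phi) : homR :=
  exist _ phi (asboolT phi_hom).

Lemma homR_valP (a : homR) : @is_hom R (regular R) M (val a).
Proof. exact: asboolW (valP a). Qed.

Lemma homR_valD (a : homR) : {morph val a : x y / x + y}.
Proof. exact: (homR_valP a).1. Qed.

Lemma homR_valA (a : homR) r s : val a (r ** s) = act r (val a s).
Proof. exact: (homR_valP a).2. Qed.

Lemma homR_ext (a b : homR) : val a =1 val b -> a = b.
Proof. by move=> eq_ab; apply/val_inj/funext. Qed.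

Lemma homR_add_hom (a b : homR) : @is_hom R (regular R) M (fun x => val a x + val b x).
Proof.
split=> [x y | r s] /=; first by rewrite !homR_valD addrACA.
by rewrite !homR_valA lm_actDr.
Qed.

Lemma homR_opp_hom (a : homR) : @is_hom R (regular R) M (fun x => - val a x).
Proof. by split=> [x y | r s] /=; rewrite ?homR_valD ?opprD // homR_valA actrN. Qed.

Definition homR_zero := homR_of (hom0 (regular R) M).
Definition homR_add (a b : homR) := homR_of (homR_add_hom a b).
Definition homR_opp (a : homR) := homR_of (homR_opp_hom a).

Lemma homR_addA : associative homR_add.
Proof. by move=> a b c; apply: homR_ext => x /=; rewrite addrA. Qed.
Lemma homR_addC : commutative homR_add.
Proof. by move=> a b; apply: homR_ext => x /=; rewrite addrC. Qed.
Lemma homR_add0 : left_id homR_zero homR_add.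
Proof. by move=> a; apply: homR_ext => x /=; rewrite add0r. Qed.
Lemma homR_addN : left_inverse homR_zero homR_opp homR_add.
Proof. by move=> a; apply: homR_ext => x /=; rewrite addNr. Qed.
HB.instance Definition _ :=
  GRing.isZmodule.Build homR homR_addA homR_addC homR_add0 homR_addN.

Lemma homR_act_hom (r : R) (a : homR) : @is_hom R (regular R) M (fun s => val a (s ** r)).
Proof.
by split=> [x y | u s] /=; rewrite ?nr_mulDl ?homR_valD // nr_mulA homR_valA.
Qed.

Definition homR_act r (a : homR) : homR := homR_of (homR_act_hom r a).

Lemma homR_actA r s a : homR_act (r ** s) a = homR_act r (homR_act s a).
Proof. by apply: homR_ext => x /=; rewrite nr_mulA. Qed.
Lemma homR_actDl r s a : homR_act (r + s) a = homR_act r a + homR_act s a.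
Proof. by apply: homR_ext => x /=; rewrite nr_mulDr homR_valD. Qed.
Lemma homR_actDr r a b : homR_act r (a + b) = homR_act r a + homR_act r b.
Proof. by apply: homR_ext. Qed.

Definition homR_mod : nuLmod R := NuLmod homR_actA homR_actDl homR_actDr.

Lemma act_map_hom (m : M) : @is_hom R (regular R) M (act^~ m).
Proof. by split=> [x y | r s]; rewrite /= ?lm_actDl ?lm_actA. Qed.

Hypothesis tu : t_unital R.

Lemma homR_act_inj (a b : homR_mod) :
  (forall r, lm_act r a = lm_act r b) -> a = b.
Proof.
move=> eq_ab; apply/homR_ext/(t_unital_additive_eq tu (homR_valD a) (homR_valD b)).
by move=> r s; have := congr1 (fun c : homR_mod => val c r) (eq_ab s).
Qed.

Lemma homR_representable (Psi : R -> homR_mod) :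
  @is_hom R (regular R) homR_mod Psi -> exists a : homR_mod, forall r, Psi r = lm_act r a.
Proof.
move=> [PsiD PsiA]; pose f t r := val (Psi r) t.
have fDl t t' r : f (t + t') r = f t r + f t' r by rewrite /f homR_valD.
have fDr t r r' : f t (r + r') = f t r + f t r' by rewrite /f PsiD.
have fA t s u : f (t ** s) u = f t (s ** u) by rewrite /f [Psi (s ** u)]PsiA.
have [g [gD f_g _]] := @tu M f fDl fDr fA.
have gA u : (fun x => g (u ** x)) =1 (fun x => act u (g x)).
  apply: t_unital_additive_eq => // [x y | x y | r s] /=.
  - by rewrite nr_mulDr gD.
  - by rewrite gD lm_actDr.
  - by rewrite -nr_mulA -!f_g /f homR_valA.
by exists (homR_of (conj gD gA)) => r; apply: homR_ext => t /=; rewrite -f_g.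
Qed.

Lemma homR_c_unital : c_unital homR_mod.
Proof. by split; [exact: homR_act_inj | exact: homR_representable]. Qed.

End HomFromR.

Section PostComposition.
Variables (R : nuRing) (M N : nuLmod R) (g : M -> N) (g_hom : is_hom g).

Definition homR_post (a : homR_mod M) : homR_mod N :=
  homR_of (hom_comp g_hom (homR_valP a)).

Lemma homR_post_hom : is_hom homR_post.
Proof.
have [gD gA] := g_hom.
by split=> [a b | r a]; apply: homR_ext => x /=; rewrite ?gD.
Qed.

End PostComposition.

Section MainArgument.
Variable R : nuRing.

Lemma R_projective_lift (P Q : nuLmod R) (g : P -> Q) (h : R -> Q) :
  R_projective_over_unitalization R -> is_hom g -> (forall q, exists p, g p = q) ->
  @is_hom R (regular R) Q h ->
  exists2 k : R -> P, @is_hom R (regular R) P k & forall s, g (k s) = h s.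
Proof.
move=> proj g_hom g_surj h_hom.
have [k [k_lin g_k]] := proj (rtLmod_of P) (rtLmod_of Q) g h
  (rt_lin_of_hom g_hom) g_surj (rt_lin_of_hom h_hom).
by exists k => //; apply: hom_of_rt_lin.
Qed.

Lemma projective_image_saturated (P Q : nuLmod R) (f : P -> Q) (q : Q) :
  R_projective_over_unitalization R -> c_unital P -> c_unital Q -> is_hom f ->
  (forall r, exists p, f p = lm_act r q) -> exists p, f p = q.
Proof.
move=> proj [_ P_repr] [Q_inj _] f_hom rq_im.
pose S := image_submod f_hom; pose I := sub_mod S.
pose f_I (p : P) : I := sub_elem (S := S) (ex_intro _ p erefl).
pose act_q (r : R) : I := sub_elem (S := S) (rq_im r).
have f_I_hom : is_hom f_I.
  by have [fD fA] := f_hom; split=> [x y | r x]; apply: val_inj; rewrite /= ?fD ?fA.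
have f_I_surj (a : I) : exists p, f_I p = a.
  by have [p fp] := sub_valP a; exists p; apply: val_inj.
have act_q_hom : @is_hom R (regular R) I act_q.
  by split=> [x y | r x]; apply: val_inj; rewrite /= ?lm_actDl ?lm_actA.
have [k k_hom f_k] := R_projective_lift proj f_I_hom f_I_surj act_q_hom.
have [p k_p] := P_repr k k_hom.
exists p; apply: Q_inj => r.
by rewrite -f_hom.2 -k_p; have := congr1 val (f_k r).
Qed.

Lemma closed_of_projective :
  R_projective_over_unitalization R -> c_unital_closed_under_cokernels R.
Proof.
move=> proj P Q C f g f_hom cP cQ g_coker; have [gD gA] := g_coker.1.
split=> [c c' eq_cc' | phi phi_hom].
- have [q gq] := cokernel_surj g_coker (c - c').
  have rq_im r : exists p, f p = lm_act r q.
    by apply: (cokernel_ker f_hom g_coker); rewrite gA gq actrB eq_cc' subrr.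
  have [p fp] := projective_image_saturated proj cP cQ f_hom rq_im.
  by apply/eqP; rewrite -subr_eq0 -gq -fp g_coker.2.1.
- have [k k_hom g_k] :=
    R_projective_lift proj g_coker.1 (cokernel_surj g_coker) phi_hom.
  have [q k_q] := cQ.2 k k_hom.
  by exists (g q) => r; rewrite -g_k k_q gA.
Qed.

Lemma projective_of_closed : t_unital R ->
  c_unital_closed_under_cokernels R -> R_projective_over_unitalization R.
Proof.
move=> tu closed M N g h [gD gA] g_surj h_lin.
have g_hom : @is_hom R (nuLmod_of M) (nuLmod_of N) g := conj gD (fun r => gA (0, r)).
have h_hom : @is_hom R (regular R) (nuLmod_of N) h :=
  nu_hom_of_rt_lin (M := regular R) h_lin.
pose S := image_submod (homR_post_hom g_hom).
have cC : c_unital (quot_mod S) := closed _ _ _ _ _ (homR_post_hom g_hom)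
  (homR_c_unital _ tu) (homR_c_unital _ tu) (quot_image_cokernel _).
have [a post_a] : S (homR_of h_hom).
  apply: c_unital_quot_saturated cC _ => r.
  have [m gm] := g_surj (h r).
  exists (homR_of (act_map_hom (m : nuLmod_of M))); apply: homR_ext => s /=.
  by rewrite (h_hom.2 s r) -gm; apply: gA.
exists (val a); split.
  exact: (rt_lin_of_nu_hom (M := regular R) (homR_valP a)).
by move=> s; have := congr1 (fun b => val b s) post_a.
Qed.

End MainArgument.

Theorem corollary7p6 (R : nuRing) :
  t_unital R ->
  (c_unital_closed_under_cokernels R <-> R_projective_over_unitalization R).
Proof.
move=> tu; split; [exact: projective_of_closed | exact: closed_of_projective].
Qed.
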